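(* In the two-party one-way communication (Holevo–Frenkel–Weiner) scenario, classical shared randomness can increase the utility of a perfect one-bit classical channel: there exist finite sets $\mathcal{X},\mathcal{B}$ and a payoff function $\beta$ on correlations $P(\mathcal{B}|\mathcal{X})$ such that $\sup_{P\in\mathcal{C}_{\mathrm{SR}}}\beta(P)>\sup_{P\in\mathcal{C}}\beta(P)$.
   Context: Scenario: Alice receives an input $x$ from a finite set $\mathcal{X}$, Bob must output $b$ from a finite set $\mathcal{B}$; a correlation is a conditional distribution $P=(P(b|x))_{x\in\mathcal{X},b\in\mathcal{B}}$, and a task is a payoff function $\beta$ assigning a real number to each correlation. The utility of a resource for a task $\beta$ is $\sup\beta(P)$ over all correlations $P$ achievable with that resource. $\mathcal{C}$ (one bit of classical communication, no shared randomness, local randomness allowed): the set of correlations of the form $P(b|x)=\sum_{m\in\{0,1\}}E(m|x)D(b|m)$, where $E(\cdot|x)$ is a probability distribution on $\{0,1\}$ for each $x$ and $D(\cdot|m)$ is a probability distribution on $\mathcal{B}$ for each $m$. $\mathcal{C}_{\mathrm{SR}}$ (one bit of classical communication assisted by an arbitrary finite amount of classical shared randomness): the set of all finite convex combinations $\sum_{\lambda}q_\lambda P_\lambda$ with $q_\lambda\ge0$, $\sum_\lambda q_\lambda=1$, and each $P_\lambda\in\mathcal{C}$. *)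

From HB Require Import structures.
From mathcomp Require Import all_boot all_order all_algebra.
From mathcomp Require Import all_classical all_reals.
From mathcomp Require Import ereal Rstruct.
From Stdlib Require Import Reals.
Set Implicit Arguments. Unset Strict Implicit. Unset Printing Implicit Defensive.
Import Order.TTheory GRing.Theory Num.Theory.
Local Open Scope classical_set_scope.
Local Open Scope ring_scope.

Definition is_distr (T : finType) (p : T -> R) : Prop :=
  (forall t, 0 <= p t) /\ \sum_(t : T) p t = 1.

(* A correlation P(b|x) is represented as a function X -> B -> R. *)

(* C : one bit of classical communication (message m in bool = {0,1}),
   local randomness for encoder E and decoder D, no shared randomness. *)
Definition Cbit (X B : finType) : set (X -> B -> R) :=
  [set P | exists (E : X -> bool -> R) (D : bool -> B -> R),
      (forall x, is_distr (E x)) /\ (forall m, is_distr (D m)) /\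
      (forall x b, P x b = \sum_(m : bool) E x m * D m b)].

Definition CbitSR (X B : finType) : set (X -> B -> R) :=
  [set P | exists (n : nat) (q : 'I_n -> R) (Ps : 'I_n -> X -> B -> R),
      is_distr q /\ (forall i, Cbit (Ps i)) /\
      (forall x b, P x b = \sum_(i < n) q i * Ps i x b)].

Definition utility (X B : finType) (beta : (X -> B -> R) -> R)
  (S : set (X -> B -> R)) : \bar R :=
  ereal_sup [set (beta P)%:E | P in S].

Arguments Cbit X B : clear implicits.
Arguments CbitSR X B : clear implicits.

From mathcomp Require Import all_boot all_order all_algebra.
From mathcomp Require Import all_classical all_reals.
From mathcomp Require Import ereal Rstruct.
From Stdlib Require Import Reals.
From mathcomp Require Import ring.

(** Without shared randomness, Bob's output distribution is P = E D with E of
    size |X| x 2 and D of size 2 x |B|, so for |X| = |B| = 3 the matrix of P has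
    rank at most 2 and vanishing determinant.  The even mixture of two
    deterministic one-bit strategies, however, has a triangular matrix with
    determinant 1/4, so the payoff [det P <> 0] separates C_SR from C. *)

Set Implicit Arguments.
Unset Strict Implicit.
Unset Printing Implicit Defensive.

Import Order.TTheory GRing.Theory Num.Theory.
Local Open Scope ring_scope.

Definition corr_mx m n (P : 'I_m -> 'I_n -> R) : 'M[R]_(m, n) := \matrix_(x, b) P x b.

Lemma Cbit_corr_mx_factor m n (P : 'I_m -> 'I_n -> R) :
  Cbit 'I_m 'I_n P -> exists (E : 'M_(m, 2)) (D : 'M_(2, n)), corr_mx P = E *m D.
Proof.
move=> [E [D [_ [_ defP]]]].
exists (\matrix_(x < m, i < 2) E x (i == 1 :> nat)), (\matrix_(i < 2, b < n) D (i == 1 :> nat) b).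
apply/matrixP => x b; rewrite !mxE defP big_bool big_ord_recr big_ord1 /= !mxE.
by rewrite addrC.
Qed.

Lemma rank_Cbit m n (P : 'I_m -> 'I_n -> R) : Cbit 'I_m 'I_n P -> (\rank (corr_mx P) <= 2)%nat.
Proof. by move=> /Cbit_corr_mx_factor [E [D ->]]; apply: mulmx_max_rank. Qed.

Lemma det_Cbit n (P : 'I_n -> 'I_n -> R) :
  (2 < n)%nat -> Cbit 'I_n 'I_n P -> \det (corr_mx P) = 0.
Proof.
move=> n_gt2 /rank_Cbit rank_le2; apply/eqP; apply: contraTT rank_le2 => det_neq0.
by rewrite mxrank_unit ?unitmxE ?unitfE // -ltnNge.
Qed.

Definition deterministic (X B : finType) (e : X -> bool) (d : bool -> B) : X -> B -> R :=
  fun x b => (d (e x) == b)%:R.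

Lemma is_distr_indicator (T : finType) (t0 : T) : is_distr (fun t => (t0 == t)%:R).
Proof.
split=> [t|]; first exact: ler0n.
by rewrite (bigD1 t0) //= eqxx big1 ?addr0 // => t; rewrite eq_sym => /negbTE ->.
Qed.

Lemma deterministic_Cbit (X B : finType) (e : X -> bool) (d : bool -> B) :
  Cbit X B (deterministic e d).
Proof.
exists (fun x m => (e x == m)%:R), (fun m b => (d m == b)%:R).
split; [|split].
- by move=> x; apply: is_distr_indicator.
- by move=> m; apply: is_distr_indicator.
- move=> x b; rewrite (bigD1 (e x)) //= eqxx mul1r big1 ?addr0 // => m /negbTE.
  by rewrite eq_sym => ->; rewrite mul0r.
Qed.

Lemma mix_CbitSR (X B : finType) (t : R) (P1 P2 : X -> B -> R) :
  0 <= t <= 1 -> Cbit X B P1 -> Cbit X B P2 ->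
  CbitSR X B (fun x b => t * P1 x b + (1 - t) * P2 x b).
Proof.
move=> /andP [t_ge0 t_le1] CP1 CP2.
exists 2%nat, (fun i => if i == ord0 then t else 1 - t),
  (fun i => if i == ord0 then P1 else P2).
split; [split|split].
- by move=> i; case: ifP; rewrite ?subr_ge0.
- by rewrite !big_ord_recr big_ord0 /= add0r addrC subrK.
- by move=> i; case: ifP.
- by move=> x b; rewrite !big_ord_recr big_ord0 /= add0r.
Qed.

(* Row x of the matrix: [1, 0, 0], [1/2, 1/2, 0], [0, 1/2, 1/2] for x = 0, 1, 2. *)
Definition corr_SR : 'I_3 -> 'I_3 -> R := fun x b =>
  2^-1 * deterministic (fun x => x == 0) (fun m => if m then 0 else 1) x b +
  (1 - 2^-1) * deterministic (fun x => x == 2) (fun m => if m then 2 else 0) x b.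

Lemma corr_SR_CbitSR : CbitSR 'I_3 'I_3 corr_SR.
Proof.
apply: mix_CbitSR; try exact: deterministic_Cbit.
by rewrite invr_ge0 invf_le1 ?ler0n ?ler1n.
Qed.

Lemma det_corr_SR : \det (corr_mx corr_SR) = 4^-1.
Proof.
rewrite det_trig; last first.
  apply/is_trig_mxP => -[[|[|[|//]]] ?] [[|[|[|//]]] ?] //= _;
  by rewrite mxE /corr_SR /deterministic /= !mulr0 addr0.
rewrite !big_ord_recr big_ord0 /= !mxE /corr_SR /deterministic /=.
by field.
Qed.

Definition full_rank_payoff {n} (P : 'I_n -> 'I_n -> R) : R := (\det (corr_mx P) != 0)%:R.

Local Open Scope ereal_scope.

Theorem theorem1 :
  exists (X B : finType) (beta : (X -> B -> R) -> R),
    utility beta (Cbit X B) < utility beta (CbitSR X B).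
Proof.
exists 'I_3, 'I_3, full_rank_payoff.
have utility_C_le0 : utility full_rank_payoff (Cbit 'I_3 'I_3) <= 0.
  by apply: ge_ereal_sup => _ [P CP <-]; rewrite /full_rank_payoff (det_Cbit _ CP) // eqxx.
have utility_SR_ge1 : 1 <= utility full_rank_payoff (CbitSR 'I_3 'I_3).
  apply: ereal_sup_ubound; exists corr_SR; first exact: corr_SR_CbitSR.
  by rewrite /full_rank_payoff det_corr_SR invr_eq0 pnatr_eq0.
apply: le_lt_trans utility_C_le0 _; apply: lt_le_trans _ utility_SR_ge1.
by rewrite lte_fin ltr01.
Qed.
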